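(* (i) For every $K\ge 2$ and evenly spaced $z_1<\dots<z_K$, the set of CDRL statistics $\{s_{z_k,z_{k+1}}:k=1,\dots,K-1\}$, where $s_{z_k,z_{k+1}}(\mu)=\mathbb{E}_{Z\sim\mu}[h_{z_k,z_{k+1}}(Z)]$, is not Bellman closed. (ii) For every $K\ge1$, the set of QDRL statistics $\{\mu\mapsto F_\mu^{-1}(\tau_k): k=1,\dots,K\}$ with $\tau_k=\frac{2k-1}{2K}$ is not Bellman closed.
   Context: For $a<b$, $h_{a,b}:\mathbb{R}\to\mathbb{R}$ is the piecewise linear function with $h_{a,b}(x)=1$ for $x\le a$, $h_{a,b}(x)=0$ for $x\ge b$, and $h_{a,b}(x)=(b-x)/(b-a)$ for $x\in[a,b]$. For a distribution $\mu$ with CDF $F_\mu$, $F_\mu^{-1}(\tau)=\inf\{z\in\mathbb{R}:F_\mu(z)\ge\tau\}$. MDP setting: finite state space $\mathcal X$, finite action space $\mathcal A$, transition kernel $p$, discount $\gamma\in[0,1)$, reward distributions $\mathcal R(\cdot\mid x,a)$; policy $\pi:\mathcal X\to\mathscr P(\mathcal A)$; given $X_0=x,A_0=a$, $R_t\sim\mathcal R(\cdot\mid X_t,A_t)$, $X_{t+1}\sim p(\cdot\mid X_t,A_t)$, $A_{t+1}\sim\pi(\cdot\mid X_{t+1})$; $\eta^\pi(x,a)$ is the law of $\sum_t\gamma^tR_t$. Bellman closedness: a finite set of statistics $\{s_1,\dots,s_K\}$ is Bellman closed if for each $\gamma\in[0,1)$ there is a single map $G_\gamma$ such that for every MDP with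 discount $\gamma$, every policy $\pi$ and every $(x,a)$, $s_{1:K}(\eta^\pi(x,a))=G_\gamma\big(\mathrm{Law}(R_0,s_{1:K}(\eta^\pi(X_1,A_1))\mid X_0=x,A_0=a)\big)$. *)

From HB Require Import structures.
From mathcomp Require Import all_boot all_order all_algebra.
From mathcomp Require Import all_classical all_reals all_analysis.
Set Implicit Arguments. Unset Strict Implicit. Unset Printing Implicit Defensive.
Import Order.TTheory GRing.Theory Num.Theory numFieldNormedType.Exports.
Local Open Scope ring_scope.
Local Open Scope classical_set_scope.

Section Defs.
Variable R : realType.

Definition hfun (a b x : R) : R :=
  if x <= a then 1 else if b <= x then 0 else (b - x) / (b - a).

Definition cdrl_stat (a b : R) (mu : probability R R) : R :=
  fine (\int[mu]_z (hfun a b z)%:E)%E.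

Definition cdf (mu : probability R R) (z : R) : R := fine (mu `]-oo, z]).
Definition quantile_stat (tau : R) (mu : probability R R) : R :=
  inf [set z : R | tau <= cdf mu z].

Definition is_kernel (X A : finType) (p : X -> A -> X -> R) : Prop :=
  (forall x a y, 0 <= p x a y) /\ (forall x a, \sum_(y : X) p x a y = 1).

Definition is_policy (X A : finType) (pi : X -> A -> R) : Prop :=
  (forall x a, 0 <= pi x a) /\ (forall x, \sum_(a : A) pi x a = 1).

(* (X_t, A_t, R_t)_t on (Omega, P) is the MDP trajectory started at
   X_0 = x0, A_0 = a0: its finite-dimensional distributions are the ones
   given by R_t ~ Rw(.|X_t,A_t), X_{t+1} ~ p(.|X_t,A_t),
   A_{t+1} ~ pi(.|X_{t+1}) (conditionally independently). *)
Definition is_trajectory (X A : finType) (p : X -> A -> X -> R)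
  (rw : X -> A -> probability R R) (pi : X -> A -> R) (x0 : X) (a0 : A)
  (d : measure_display) (Omega : measurableType d) (P : probability Omega R)
  (Xs : nat -> Omega -> X) (As : nat -> Omega -> A) (Rs : nat -> Omega -> R)
  : Prop :=
  [/\ (forall t x, measurable (Xs t @^-1` [set x])),
      (forall t a, measurable (As t @^-1` [set a])),
      (forall t, measurable_fun setT (Rs t)) &
      forall (n : nat) (xs : nat -> X) (as_ : nat -> A) (Bs : nat -> set R),
        (forall t, measurable (Bs t)) ->
        fine (P [set w | forall t, (t <= n)%N ->
                   [/\ Xs t w = xs t, As t w = as_ t & Bs t (Rs t w)]]) =
        (if (xs 0%N == x0) && (as_ 0%N == a0) then 1 else 0) *
        (\prod_(t < n.+1) fine (rw (xs t) (as_ t) (Bs t))) *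
        (\prod_(t < n) (p (xs t) (as_ t) (xs t.+1) * pi (xs t.+1) (as_ t.+1)))].

Definition disc_partial (Omega : Type) (gamma : R) (Rs : nat -> Omega -> R)
  (w : Omega) : nat -> R := series (fun t => gamma ^+ t * Rs t w).

Definition is_return_dist (X A : finType) (gamma : R) (p : X -> A -> X -> R)
  (rw : X -> A -> probability R R) (pi : X -> A -> R)
  (eta : X -> A -> probability R R) : Prop :=
  forall x a, exists (d : measure_display) (Omega : measurableType d)
    (P : probability Omega R) (Xs : nat -> Omega -> X) (As : nat -> Omega -> A)
    (Rs : nat -> Omega -> R),
    [/\ is_trajectory p rw pi x a P Xs As Rs,
        (forall w, cvgn (disc_partial gamma Rs w)) &
        forall B : set R, measurable B ->
          eta x a B = P [set w | B (limn (disc_partial gamma Rs w))]].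

(* Law(R_0, s_{1:m}(eta(X_1,A_1))) as a set function on R x R^m.  Since the
   second component takes finitely many values, the law is determined by its
   values on sets all of whose sections are Borel; it is set to 0 elsewhere. *)
Definition joint_law (X A : finType) (m : nat)
  (s : 'I_m -> probability R R -> R) (eta : X -> A -> probability R R)
  (d : measure_display) (Omega : measurableType d) (P : probability Omega R)
  (Xs : nat -> Omega -> X) (As : nat -> Omega -> A) (Rs : nat -> Omega -> R)
  : set (R * ('I_m -> R)) -> \bar R :=
  fun E => if `[< forall v, measurable [set r | E (r, v)] >] then
     P [set w | E (Rs 0%N w, fun k => s k (eta (Xs 1%N w) (As 1%N w)))]
   else 0%E.

Definition bellman_closed (m : nat) (s : 'I_m -> probability R R -> R) : Prop :=
  forall gamma : R, 0 <= gamma < 1 ->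
  exists G : (set (R * ('I_m -> R)) -> \bar R) -> ('I_m -> R),
  forall (X A : finType) (p : X -> A -> X -> R)
    (rw : X -> A -> probability R R) (pi : X -> A -> R)
    (eta : X -> A -> probability R R),
    is_kernel p -> is_policy pi -> is_return_dist gamma p rw pi eta ->
    forall (x : X) (a : A) (d : measure_display) (Omega : measurableType d)
      (P : probability Omega R) (Xs : nat -> Omega -> X)
      (As : nat -> Omega -> A) (Rs : nat -> Omega -> R),
      is_trajectory p rw pi x a P Xs As Rs ->
      (fun k => s k (eta x a)) = G (joint_law s eta P Xs As Rs).

End Defs.

From Pilot Require Import Defs.
From HB Require Import structures.
From mathcomp Require Import all_boot all_order all_algebra.
From mathcomp Require Import all_classical all_reals all_analysis.
From mathcomp Require Import measurable_realfun.
From mathcomp Require Import ring lra zify.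
Import Order.TTheory GRing.Theory Num.Theory numFieldNormedType.Exports.
Set Implicit Arguments.
Unset Strict Implicit.
Unset Printing Implicit Defensive.
Local Open Scope ring_scope.
Local Open Scope classical_set_scope.

(* A Bellman map has to give the same statistics at the start state to any
   two MDPs with the same joint law of (R_0, s(eta(X_1, A_1))).  In the MDP
   below the start state [sx] has reward 0 and moves to [sy] with probability
   w, where the reward law is p \d_a1 + (1 - p) \d_a2, or to [sz], where the
   reward is b; afterwards a reward-free absorbing state is reached.  The
   joint law sees (a1, a2) only through the statistics of the reward law at
   [sy], whereas the return law at [sx] is
   w (p \d_(g a1) + (1 - p) \d_(g a2)) + (1 - w) \d_(g b).
   With g = 1/2, the CDRL statistics are refuted by the deterministic rewards
   z_K and 2 z_K + 2 at [sy], both at or above the top grid point, of which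
   discounting brings only the first below it (mirrored at z_1 when
   z_K <= 0).  The quantile statistics are refuted by w = p = 1 - 1/(2K),
   a1 = 0, a2 in {1, 2} and b = 3: all levels are at most p, so every
   quantile at [sy] is 0, while the top quantile at [sx] is a2 / 2. *)

Section iverson.
Variable R : realType.

Definition iverson (Q : Prop) : R := (`[< Q >])%:R.

Lemma iversonT (Q : Prop) : Q -> iverson Q = 1.
Proof. by move=> q; rewrite /iverson asboolT. Qed.

Lemma iversonF (Q : Prop) : ~ Q -> iverson Q = 0.
Proof. by move=> q; rewrite /iverson asboolF. Qed.

Lemma iverson_and (P Q : Prop) : iverson (P /\ Q) = iverson P * iverson Q.
Proof. by rewrite /iverson asbool_and -mulnb natrM. Qed.

Lemma iverson_eq (T : eqType) (x y : T) : iverson (x = y) = (x == y)%:R.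
Proof. by rewrite /iverson (asbool_equiv_eq (rwP eqP)) asboolb. Qed.

Lemma dirac_iverson d (T : measurableType d) (a : T) (A : set T) :
  (\d_a : probability T R) A = (iverson (A a))%:E.
Proof. by rewrite /= diracE. Qed.

Lemma probability_cstI d (T : measurableType d) (mu : probability T R)
    (Q : Prop) (E : set T) :
  mu [set t | Q /\ E t] = ((iverson Q)%:E * mu [set t | E t])%E.
Proof.
have [q|nq] := pselect Q.
  rewrite iversonT // mul1e; congr (mu _); apply/seteqP; split=> t //=.
  by move=> [].
rewrite iversonF // mul0e (_ : [set t | _] = set0) ?measure0 //.
by apply/seteqP; split=> t // [].
Qed.

Lemma fine_iversonM (Q : Prop) (x : \bar R) :
  fine ((iverson Q)%:E * x)%E = iverson Q * fine x.
Proof.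
have [q|nq] := pselect Q; first by rewrite iversonT // mul1e mul1r.
by rewrite iversonF // mul0e mul0r.
Qed.

Lemma probability_cst d (T : measurableType d) (P : probability T R)
    (Q : Prop) :
  P [set _ | Q] = (iverson Q)%:E.
Proof.
have [q|nq] := pselect Q.
  rewrite iversonT // (_ : [set _ | Q] = setT) ?probability_setT //.
  by apply/seteqP; split.
rewrite iversonF // (_ : [set _ | Q] = set0) ?measure0 //.
by apply/seteqP; split.
Qed.

Lemma measurable_set_cst d (T : measurableType d) (Q : Prop) :
  measurable [set _ : T | Q].
Proof.
have [q|nq] := pselect Q.
  by rewrite (_ : [set _ | Q] = setT) //; apply/seteqP; split.
by rewrite (_ : [set _ | Q] = set0) //; apply/seteqP; split.
Qed.

End iverson.

Section mixture.
Context d (T : measurableType d) (R : realType).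
Variables (w : R) (m1 m2 : probability T R).

(* Outside [0, 1] the weight is meaningless and [m1] is returned, so that the
   mixture is always a probability. *)
Definition mixture (A : set T) : \bar R :=
  if 0 <= w <= 1 then (w%:E * m1 A + (1 - w)%:E * m2 A)%E else m1 A.

Let mixture0 : mixture set0 = 0%E.
Proof. by rewrite /mixture !measure0 !mule0 adde0 if_same. Qed.

Let mixture_ge0 A : (0 <= mixture A)%E.
Proof.
rewrite /mixture; case: ifPn => // /andP[w0 w1].
by rewrite adde_ge0 // mule_ge0 // lee_fin subr_ge0.
Qed.

Let mixture_sigma_additive : semi_sigma_additive mixture.
Proof.
have -> : mixture = if 0 <= w <= 1
    then (fun A => w%:E * m1 A + (1 - w)%:E * m2 A)%E else m1.
  by apply/funext => A; rewrite /mixture; case: ifP.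
case: ifPn => [/andP[w0 w1]|_]; last exact: measure_semi_sigma_additive.
have w0' : 0 <= 1 - w by rewrite subr_ge0.
have -> : (fun A => w%:E * m1 A + (1 - w)%:E * m2 A)%E =
          measure_add (mscale (NngNum w0) m1) (mscale (NngNum w0') m2).
  by apply/funext => A; rewrite measure_addE.
exact: measure_semi_sigma_additive.
Qed.

HB.instance Definition _ := isMeasure.Build _ _ _ mixture
  mixture0 mixture_ge0 mixture_sigma_additive.

Let mixtureT : mixture setT = 1%E.
Proof.
rewrite /mixture !probability_setT; case: ifPn => // _.
by rewrite !mule1 -EFinD subrKC.
Qed.

HB.instance Definition _ := Measure_isProbability.Build _ _ _ mixture mixtureT.

Lemma mixtureE A :
  0 <= w <= 1 -> mixture A = (w%:E * m1 A + (1 - w)%:E * m2 A)%E.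
Proof. by rewrite /mixture => ->. Qed.

End mixture.

Section two_point.
Context d (T : measurableType d) (R : realType).

Definition two_point (q : R) (u v : T) : probability T R := mixture q \d_u \d_v.

Lemma two_pointE q u v A : 0 <= q <= 1 ->
  two_point q u v A = (q * iverson R (A u) + (1 - q) * iverson R (A v))%:E.
Proof. by move=> q01; rewrite /= mixtureE // !dirac_iverson -!EFinM -EFinD. Qed.

End two_point.

Section counterexample_mdp.
Variable R : realType.
Variables (w p a1 a2 b : R).

Definition State := (bool * bool)%type.
Definition sx : State := (false, false).
Definition sy : State := (false, true).
Definition sz : State := (true, false).
Definition sink : State := (true, true).

Definition mdp_kernel (s : State) (_ : unit) (s' : State) : R :=
  if s == sx then (if s' == sy then w else if s' == sz then 1 - w else 0)
  else (s' == sink)%:R.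

Definition mdp_policy (_ : State) (_ : unit) : R := 1.

Definition mdp_reward (s : State) (_ : unit) : probability R R :=
  if s == sy then two_point p a1 a2
  else if s == sz then (\d_b : probability R R) else \d_(0 : R).

Lemma sum_State (F : State -> R) : \sum_s F s = F sx + F sy + F sz + F sink.
Proof.
rewrite (eq_bigr (fun s => F (s.1, s.2))); last by case.
rewrite -(pair_bigA _ (fun i j => F (i, j))) /= !big_bool /=; ring.
Qed.

Lemma is_kernel_mdp : 0 <= w <= 1 -> is_kernel mdp_kernel.
Proof.
move=> /andP[w0 w1]; split.
  move=> s u s'; rewrite /mdp_kernel; case: ifP => _ //.
  by case: ifP => _ //; case: ifP => _ //; rewrite subr_ge0.
by move=> [[] []] u; rewrite sum_State /mdp_kernel /= ?addr0 ?add0r ?subrKC.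
Qed.

Lemma is_policy_mdp : is_policy mdp_policy.
Proof. by split => // s; rewrite /mdp_policy big_const card_unit /= addr0. Qed.

Lemma mdp_kernel_to_start s u : mdp_kernel s u sx = 0.
Proof. by rewrite /mdp_kernel; case: ifP. Qed.

Lemma path_weight_off_start m (ys : nat -> State) (as_ : nat -> unit)
    (Cs : nat -> set R) : ys 0%N != sx ->
  (\prod_(t < m) fine (mdp_reward (ys t.+1) (as_ t.+1) (Cs t.+1))) *
  (\prod_(t < m) (mdp_kernel (ys t) (as_ t) (ys t.+1) *
                  mdp_policy (ys t.+1) (as_ t.+1))) =
  iverson R (forall t, (t < m)%N -> sink = ys t.+1 /\ Cs t.+1 0).
Proof.
elim: m ys as_ Cs => [|m IH] ys as_ Cs ys0.
  by rewrite !big_ord0 mulr1 iversonT.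
rewrite !big_ord_recl /= mulrACA {1}/mdp_kernel (negbTE ys0) {1}/mdp_policy.
rewrite mulr1; have [ys1|ys1] := eqVneq (ys 1%N) sink; last first.
  rewrite mulr0 mul0r iversonF // => /(_ 0%N erefl) [/esym/eqP].
  by rewrite (negbTE ys1).
have /= IH1 := IH (fun t => ys t.+1) (fun t => as_ t.+1) (fun t => Cs t.+1).
rewrite -[true%:R]/(1 : R) mulr1 IH1 ?ys1 //.
rewrite /mdp_reward /= -[\1__ _]/(iverson R (Cs 1%N 0)) -iverson_and.
congr iverson; apply/propext; split => [[C0 tail] [|t] tm|H] //.
  exact: tail.
by split => [|t tm]; [case: (H 0%N) | exact: H].
Qed.

Definition two_step_states {T} (s0 : State) (f1 : T -> State) (t : nat)
  (om : T) : State := match t with 0 => s0 | 1 => f1 om | _ => sink end.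

Definition two_step_rewards {T} (g0 g1 : T -> R) (t : nat) (om : T) : R :=
  match t with 0 => g0 om | 1 => g1 om | _ => 0 end.

Definition no_actions {T} (t : nat) (om : T) : unit := tt.

Section two_step_trajectory.
Context d (T : measurableType d) (P : probability T R).
Variables (s0 : State) (f1 : T -> State) (g0 g1 : T -> R).
Hypotheses (mf1 : forall s, measurable (f1 @^-1` [set s]))
  (mg0 : measurable_fun setT g0) (mg1 : measurable_fun setT g1).
Hypothesis law_R0 : forall B0, measurable B0 ->
  P [set om | B0 (g0 om)] = mdp_reward s0 tt B0.
Hypothesis law_step : forall B0 s1 B1, measurable B0 -> measurable B1 ->
  fine (P [set om | B0 (g0 om) /\ f1 om = s1 /\ B1 (g1 om)]) =
  fine (mdp_reward s0 tt B0) * mdp_kernel s0 tt s1 * fine (mdp_reward s1 tt B1).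

Lemma is_trajectory_two_step : is_trajectory mdp_kernel mdp_reward mdp_policy
  s0 tt P (two_step_states s0 f1) no_actions (two_step_rewards g0 g1).
Proof.
split.
- move=> [|[|t]] s; [exact: (measurable_set_cst _ (s0 = s)) | exact: mf1 |
                     exact: (measurable_set_cst _ (sink = s))].
- by move=> t a; exact: (measurable_set_cst _ (tt = a)).
- by move=> [|[|t]] //; exact: measurable_cst.
move=> n xs as_ Bs mBs; have as0 : as_ 0%N = tt by case: (as_ 0%N).
rewrite as0 eqxx andbT.
have [xs0|ne0] := eqVneq (xs 0%N) s0; last first.
  rewrite !mul0r (_ : [set _ | _] = set0) ?measure0 //.
  apply/seteqP; split => om // /(_ 0%N erefl) [/esym/eqP].
  by rewrite (negbTE ne0).
rewrite mul1r; case: n => [|m].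
  rewrite big_ord1 big_ord0 mulr1 /= xs0 as0 -law_R0 //.
  congr (fine (P _)); apply/seteqP; split => om /=.
  - by move=> /(_ 0%N erefl) [].
  - by move=> B0 [|t] // _; split; rewrite ?xs0 ?as0.
pose Tail := forall t, (t < m)%N -> sink = xs t.+2 /\ Bs t.+2 0.
have -> : [set om | forall t, (t <= m.+1)%N ->
      [/\ two_step_states s0 f1 t om = xs t, no_actions t om = as_ t &
          Bs t (two_step_rewards g0 g1 t om)]] =
    [set om | Tail /\ (Bs 0%N (g0 om) /\ f1 om = xs 1%N /\ Bs 1%N (g1 om))].
  apply/seteqP; split => om /=.
  - move=> H; have [_ _ B0] := H 0%N erefl; have [e1 _ B1] := H 1%N erefl.
    by split=> // t tm; have [] := H t.+2 tm.
  - move=> [tail [B0 [e1 B1]]] [|[|t]] tm //=; split; rewrite ?xs0 ?as0 //;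
      by [case: (as_ _) | case: (tail t tm)].
rewrite probability_cstI fine_iversonM law_step //.
rewrite !big_ord_recl /=.
set PF := \prod_(i < m) fine _; set PG := \prod_(i < m) (_ * _).
have [xs1|xs1] := eqVneq (xs 1%N) sx.
  by rewrite xs1 !mdp_kernel_to_start !(mulr0, mul0r).
have /= weight := @path_weight_off_start m (fun t => xs t.+1)
  (fun t => as_ t.+1) (fun t => Bs t.+1) xs1.
have -> : iverson R Tail = PF * PG by rewrite -weight.
rewrite xs0 as0 -[bump 0 0]/1%N; case: (as_ 1%N); rewrite /mdp_policy; ring.
Qed.

End two_step_trajectory.

Lemma is_trajectory_off_start d (T : measurableType d) (P : probability T R)
    (s0 : State) (g0 : T -> R) :
  s0 != sx -> measurable_fun setT g0 ->
  (forall B0, measurable B0 -> P [set om | B0 (g0 om)] = mdp_reward s0 tt B0) ->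
  is_trajectory mdp_kernel mdp_reward mdp_policy s0 tt P
    (two_step_states s0 (fun _ => sink)) no_actions
    (two_step_rewards g0 (fun _ => 0)).
Proof.
move=> s0x mg0 law_R0; apply: is_trajectory_two_step => //.
  by move=> s; exact: (measurable_set_cst _ (sink = s)).
move=> B0 s1 B1 mB0 mB1.
have -> : [set om | B0 (g0 om) /\ sink = s1 /\ B1 0] =
    [set om | (sink = s1 /\ B1 0) /\ B0 (g0 om)].
  by apply/seteqP; split => om /=; tauto.
rewrite probability_cstI fine_iversonM law_R0 // iverson_and iverson_eq.
rewrite /mdp_kernel (negbTE s0x) eq_sym.
have [<-|_] := eqVneq sink s1; last by rewrite /= mulr0n !(mul0r, mulr0).
by rewrite [mdp_reward sink _]/= dirac_iverson /= mulr1n; ring.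
Qed.

(* The outcomes 0, 1 and 2 of the first step from [sx] stand for reaching
   [sy] with reward [a1], [sy] with reward [a2], and [sz], respectively. *)
Definition start_outcome : probability nat R :=
  mixture w (two_point p 0%N 1%N) \d_2%N.

Definition start_next (n : nat) : State := if n == 2%N then sz else sy.

Definition start_reward (n : nat) : R :=
  if n == 0%N then a1 else if n == 1%N then a2 else b.

Hypotheses (w01 : 0 <= w <= 1) (p01 : 0 <= p <= 1).

Lemma fine_start_outcome A : fine (start_outcome A) =
  w * (p * iverson R (A 0%N) + (1 - p) * iverson R (A 1%N)) +
  (1 - w) * iverson R (A 2%N).
Proof.
by rewrite /start_outcome /= mixtureE // two_pointE // dirac_iverson.
Qed.

Lemma is_trajectory_start :
  is_trajectory mdp_kernel mdp_reward mdp_policy sx tt start_outcome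
    (two_step_states sx start_next) no_actions
    (two_step_rewards (fun _ => 0) start_reward).
Proof.
apply: is_trajectory_two_step => //.
  by move=> B0 mB0; rewrite probability_cst /mdp_reward /= dirac_iverson.
move=> B0 s1 B1 mB0 mB1.
rewrite fine_start_outcome [mdp_reward sx _]/= dirac_iverson /=.
rewrite /start_next /start_reward /= !iverson_and !iverson_eq.
case: s1 => [[] []]; rewrite [mdp_reward _ _]/= ?two_pointE ?dirac_iverson //=.
all: rewrite /mdp_kernel /=; ring.
Qed.

Lemma disc_partial_two_step (g : R) T (g0 g1 : T -> R) (om : T) :
  disc_partial g (two_step_rewards g0 g1) om @ \oo --> g0 om + g * g1 om.
Proof.
apply: cvg_near_cst; exists 2%N => // [[|[|n]]] //= _.
rewrite /disc_partial /series /= big_nat_recl // big_nat_recl //.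
by rewrite big1 ?addr0 /= ?expr0 ?mul1r ?expr1 // => i _; rewrite mulr0.
Qed.

Definition mdp_return (g : R) (s : State) (u : unit) : probability R R :=
  if s == sx then
    (mixture w (two_point p (g * a1) (g * a2)) \d_(g * b) : probability R R)
  else mdp_reward s u.

Lemma return_law_two_step (g : R) (s0 : State) d (T : measurableType d)
    (P : probability T R) (f1 : T -> State) (g0 g1 : T -> R)
    (e : probability R R) :
  is_trajectory mdp_kernel mdp_reward mdp_policy s0 tt P
    (two_step_states s0 f1) no_actions (two_step_rewards g0 g1) ->
  (forall B, measurable B -> e B = P [set om | B (g0 om + g * g1 om)]) ->
  exists d' (Omega : measurableType d') (P' : probability Omega R)
    (Xs : nat -> Omega -> State) (As : nat -> Omega -> unit)
    (Rs : nat -> Omega -> R),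
    [/\ is_trajectory mdp_kernel mdp_reward mdp_policy s0 tt P' Xs As Rs,
        (forall om, cvgn (disc_partial g Rs om)) &
        forall B, measurable B ->
          e B = P' [set om | B (limn (disc_partial g Rs om))]].
Proof.
move=> traj law; exists d, T, P, (two_step_states s0 f1), no_actions,
  (two_step_rewards g0 g1); split => // [om|B mB].
  exact: cvgP _ (@disc_partial_two_step g _ g0 g1 om).
rewrite law //; congr (P _); apply/funext => om /=.
by rewrite (cvg_lim _ (@disc_partial_two_step g _ g0 g1 om)).
Qed.

Lemma is_return_dist_mdp (g : R) :
  is_return_dist g mdp_kernel mdp_reward mdp_policy (mdp_return g).
Proof.
move=> s []; case: s => [[] []].
- apply: (@return_law_two_step _ _ _ _ (\d_(0 : R) : probability R R)
    (fun _ => sink) (fun _ => 0) (fun _ => 0)).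
    by apply: is_trajectory_off_start.
  by move=> B _; rewrite probability_cst dirac_iverson mulr0 addr0.
- apply: (@return_law_two_step _ _ _ _ (\d_(0 : R) : probability R R)
    (fun _ => sink) (fun _ => b) (fun _ => 0)).
    by apply: is_trajectory_off_start.
  by move=> B _; rewrite probability_cst dirac_iverson mulr0 addr0.
- apply: (@return_law_two_step _ _ _ _ (two_point p a1 a2) (fun _ => sink)
    id (fun _ => 0)).
    exact: is_trajectory_off_start.
  by move=> B _; rewrite mulr0; under eq_fun do rewrite addr0.
- apply: (return_law_two_step is_trajectory_start) => B _.
  rewrite /mdp_return /= mixtureE // two_pointE // dirac_iverson.
  rewrite /start_outcome /= mixtureE // two_pointE // dirac_iverson /=.
  by rewrite !add0r.
Qed.

End counterexample_mdp.

Lemma not_bellman_closed_two_point (R : realType) m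
    (s : 'I_m -> probability R R -> R) (g w p a1 a2 a1' a2' b : R) :
  0 <= g < 1 -> 0 <= w <= 1 -> 0 <= p <= 1 ->
  (forall k, s k (two_point p a1 a2) = s k (two_point p a1' a2')) ->
  (exists k, s k (mixture w (two_point p (g * a1) (g * a2)) \d_(g * b)) !=
             s k (mixture w (two_point p (g * a1') (g * a2')) \d_(g * b))) ->
  ~ bellman_closed s.
Proof.
move=> g01 w01 p01 same_at_y [k differ_at_x] /(_ g g01) [G HG].
have Bellman_eq c1 c2 : (fun k => s k (mdp_return w p c1 c2 b g sx tt)) =
    G (joint_law s (mdp_return w p c1 c2 b g) (start_outcome w p)
         (two_step_states sx start_next) no_actions
         (two_step_rewards (fun _ => 0) (start_reward c1 c2 b))).
  apply: HG; [exact: is_kernel_mdp w01 | exact: is_policy_mdp |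
              by apply: is_return_dist_mdp | by apply: is_trajectory_start].
have same_joint_law :
    joint_law s (mdp_return w p a1 a2 b g) (start_outcome w p)
      (two_step_states sx start_next) no_actions
      (two_step_rewards (fun _ => 0) (start_reward a1 a2 b)) =
    joint_law s (mdp_return w p a1' a2' b g) (start_outcome w p)
      (two_step_states sx start_next) no_actions
      (two_step_rewards (fun _ => 0) (start_reward a1' a2' b)).
  apply/funext => E; rewrite /joint_law; case: ifP => // _.
  congr (_ _); apply/funext => om /=; congr (E (_, _)); apply/funext => k' /=.
  by rewrite /start_next; case: ifP => // _; exact: same_at_y.
move: (Bellman_eq a1 a2) (Bellman_eq a1' a2').
rewrite same_joint_law => <- /(congr1 (fun f => f k)) /= same_at_x.
by rewrite same_at_x eqxx in differ_at_x.
Qed.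

Section cdrl.
Variable R : realType.
Implicit Types lo hi x u v : R.

Lemma measurable_hfun lo hi : measurable_fun setT (hfun lo hi).
Proof.
rewrite /hfun; apply: measurable_fun_ifT.
- by apply: measurable_fun_ler => //; exact: measurable_cst.
- exact: measurable_cst.
apply: measurable_fun_ifT.
- by apply: measurable_fun_ler => //; exact: measurable_cst.
- exact: measurable_cst.
by apply: measurable_funM => //; apply: measurable_funB.
Qed.

Lemma hfun_le lo hi x : x <= lo -> hfun lo hi x = 1.
Proof. by rewrite /hfun => ->. Qed.

Lemma hfun_ge lo hi x : lo < hi -> hi <= x -> hfun lo hi x = 0.
Proof.
by move=> lohi hix; rewrite /hfun hix leNgt (lt_le_trans lohi hix).
Qed.

Lemma hfun_gt0 lo hi x : lo < hi -> x < hi -> 0 < hfun lo hi x.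
Proof.
move=> lohi xhi; rewrite /hfun; case: ifP => // _.
by rewrite leNgt xhi divr_gt0 // subr_gt0.
Qed.

Lemma hfun_lt1 lo hi x : lo < hi -> lo < x -> hfun lo hi x < 1.
Proof.
move=> lohi lox; rewrite /hfun leNgt lox /=; case: ifP => // /negbT.
by rewrite -ltNge => xhi; rewrite ltr_pdivrMr ?subr_gt0 // mul1r; lra.
Qed.

Lemma cdrl_stat_dirac lo hi u (mu : probability R R) :
  (forall A, mu A = (\d_u : probability R R) A) ->
  cdrl_stat lo hi mu = hfun lo hi u.
Proof.
move=> mu_dirac; rewrite /cdrl_stat.
have -> : (mu : set R -> \bar R) = \d_u by apply/funext => A; rewrite mu_dirac.
rewrite integral_dirac ?diracT ?mul1e //.
by apply/measurable_EFinP; exact: measurable_hfun.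
Qed.

Lemma cdrl_stat_two_point1 lo hi u v :
  cdrl_stat lo hi (two_point 1 u v) = hfun lo hi u.
Proof.
apply: cdrl_stat_dirac => A; rewrite two_pointE ?ler01 ?lexx // dirac_iverson.
by rewrite subrr mul0r addr0 mul1r.
Qed.

Lemma cdrl_stat_mixture1 lo hi u v (m : probability R R) :
  cdrl_stat lo hi (mixture 1 (two_point 1 u v) m) = hfun lo hi u.
Proof.
apply: cdrl_stat_dirac => A; rewrite /= mixtureE ?ler01 ?lexx //.
rewrite two_pointE ?ler01 ?lexx // dirac_iverson.
by rewrite subrr mul0e adde0 mul1e mul0r addr0 mul1r.
Qed.

End cdrl.

Lemma cdrl_not_bellman_closed (R : realType) (K : nat) (z1 delta : R) :
  (2 <= K)%N -> 0 < delta ->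
  ~ bellman_closed (fun k : 'I_K.-1 =>
      cdrl_stat (z1 + k%:R * delta) (z1 + (k.+1)%:R * delta)).
Proof.
case: K => [|[|n]] // _ delta_gt0.
pose z (k : nat) := z1 + k%:R * delta.
have z_lt k : z k < z k.+1 by rewrite ltrD2l ltr_pM2r // ltr_nat.
have z_le i j : (i <= j)%N -> z i <= z j.
  by move=> ij; rewrite lerD2l ler_pM2r // ler_nat.
have half01 : 0 <= (1 / 2 : R) < 1 by apply/andP; split; lra.
have one01 : 0 <= (1 : R) <= 1 by rewrite ler01 lexx.
have [top_gt0|top_le0] := ltrP 0 (z n.+1).
- apply: (@not_bellman_closed_two_point _ _ _ (1 / 2) 1 1 (z n.+1) 0
    (2 * z n.+1 + 2) 0 0) => //.
    move=> k; have zk : z k.+1 <= z n.+1 by apply: z_le; exact: ltn_ord.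
    rewrite !cdrl_stat_two_point1 !hfun_ge //;
      by [exact: z_lt | exact: zk | apply: le_trans zk _; lra].
  exists ord_max; rewrite !cdrl_stat_mixture1 /=.
  rewrite [X in _ != X]hfun_ge ?gt_eqF ?hfun_gt0 // -/(z n) -/(z n.+1);
    by [exact: z_lt | lra].
- have z1_lt0 : z1 < 0.
    have : 0 < (n.+1)%:R * delta by rewrite mulr_gt0.
    by move: top_le0; rewrite /z; lra.
  apply: (@not_bellman_closed_two_point _ _ _ (1 / 2) 1 1 z1 0
    (2 * z1 - 2) 0 0) => //.
    move=> k; have := z_le 0%N k (leq0n k).
    rewrite {1}/z mulr0n mul0r addr0 => z1k.
    by rewrite !cdrl_stat_two_point1 !hfun_le //; rewrite -/(z k); lra.
  exists ord0; rewrite !cdrl_stat_mixture1 /= mul0r addr0.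
  rewrite [X in _ != X]hfun_le ?lt_eqF ?hfun_lt1 //; lra.
Qed.

Section quantile.
Variable R : realType.

Lemma cdf_homo (mu : probability R R) : {homo Defs.cdf mu : x y / x <= y}.
Proof.
move=> x y xy; rewrite /Defs.cdf; apply: fine_le; rewrite ?inE;
  try exact: fin_num_measure.
apply: le_measure; rewrite ?inE // => t /=.
by rewrite !in_itv /= => /le_trans; apply.
Qed.

Lemma quantile_statE (tau v : R) (mu : probability R R) :
  (forall z, z < v -> Defs.cdf mu z < tau) -> tau <= Defs.cdf mu v ->
  quantile_stat tau mu = v.
Proof.
move=> below at_v; rewrite /quantile_stat.
rewrite (_ : [set z | tau <= Defs.cdf mu z] = [set` `[v, +oo[%R]) ?inf_itv //.
apply/seteqP; split => z /=; rewrite in_itv /= andbT.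
- by move=> tau_le; rewrite leNgt; apply/negP => /below; rewrite ltNge tau_le.
- by move=> vz; apply: le_trans at_v (cdf_homo mu vz).
Qed.

Lemma cdf_dirac (u z : R) :
  Defs.cdf (\d_u : probability R R) z = ((u <= z)%R : bool)%:R.
Proof. by rewrite /Defs.cdf dirac_iverson /iverson asboolb in_itv. Qed.

Lemma cdf_mixture (w : R) (m1 m2 : probability R R) z : 0 <= w <= 1 ->
  Defs.cdf (mixture w m1 m2) z = w * Defs.cdf m1 z + (1 - w) * Defs.cdf m2 z.
Proof.
move=> w01; rewrite /Defs.cdf /= mixtureE //.
by rewrite -[m1 _]fineK ?fin_num_measure // -[m2 _]fineK ?fin_num_measure.
Qed.

Lemma quantile_two_point_lower (tau q u v : R) :
  u < v -> 0 < tau <= q -> q <= 1 ->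
  quantile_stat tau (two_point q u v) = u.
Proof.
move=> uv /andP[tau0 tauq] q1; have q01 : 0 <= q <= 1 by apply/andP; split; lra.
apply: quantile_statE => [z zu|]; rewrite cdf_mixture // !cdf_dirac.
  by rewrite (lt_geF zu) (lt_geF (lt_trans zu uv)) !mulr0 addr0.
by rewrite lexx (lt_geF uv) mulr1 mulr0 addr0.
Qed.

Lemma quantile_mixture_mid (w q u c e : R) : 0 < w <= 1 -> 0 <= q < 1 ->
  u < c -> c < e -> quantile_stat w (mixture w (two_point q u c) \d_e) = c.
Proof.
move=> /andP[w0 w1] /andP[q0 q1] uc ce.
have w01 : 0 <= w <= 1 by apply/andP; split; lra.
have q01 : 0 <= q <= 1 by apply/andP; split; lra.
apply: quantile_statE => [z zc|]; rewrite !cdf_mixture // !cdf_dirac.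
  rewrite (lt_geF zc) (lt_geF (lt_trans zc ce)) !mulr0 !addr0.
  by case: (u <= z); rewrite /= ?mulr1n ?mulr0n; nra.
by rewrite lexx (ltW uc) (lt_geF ce) /= !mulr1 mulr0 addr0 subrKC mulr1.
Qed.

End quantile.

Lemma qdrl_not_bellman_closed (R : realType) (K : nat) : (1 <= K)%N ->
  ~ @bellman_closed R _ (fun k : 'I_K =>
      quantile_stat ((2 * k + 1)%N%:R / (2 * K)%N%:R)).
Proof.
case: K => [|n] // _.
have N_def : (2 * n.+1)%N = (2 * n + 1).+1 by lia.
set N : R := (2 * n.+1)%N%:R.
have N_gt1 : 1 < N by rewrite /N ltr1n; lia.
have N_gt0 : 0 < N by lra.
have N_neq0 : N != 0 by rewrite gt_eqF.
set q : R := 1 - N^-1.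
have qN : q * N = N - 1 by rewrite /q mulrBl mul1r mulVf.
have q_lt1 : q < 1 by rewrite /q ltrBlDl ltrDr invr_gt0.
have q_gt0 : 0 < q by rewrite /q subr_gt0 invf_lt1.
have q01 : 0 <= q <= 1 by apply/andP; split; lra.
have half01 : 0 <= (1 / 2 : R) < 1 by apply/andP; split; lra.
have tau_le (k : 'I_n.+1) : (2 * k + 1)%N%:R / N <= q.
  rewrite ler_pdivrMr // qN lerBrDr natr1 /N ler_nat.
  by have := ltn_ord k; lia.
have tau_top : (2 * n + 1)%N%:R / N = q.
  by rewrite -[q](mulfK N_neq0) qN /N N_def -natr1 addrK.
apply: (@not_bellman_closed_two_point _ _ _ (1 / 2) q q 0 1 0 2 3) => //.
  move=> k; have tau_k : 0 < (2 * k + 1)%N%:R / N <= q.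
    by rewrite divr_gt0 ?ltr0n ?tau_le //; lia.
  by rewrite !quantile_two_point_lower ?ltr01 ?ltr0n //; case/andP: q01.
exists ord_max; rewrite /= tau_top !quantile_mixture_mid //;
  by rewrite ?lt_eqF //; try (apply/andP; split); lra.
Qed.

Theorem lemma3 (R : realType) :
  (forall (K : nat) (z1 delta : R), (2 <= K)%N -> 0 < delta ->
     ~ @bellman_closed R _ (fun k : 'I_K.-1 =>
          cdrl_stat (z1 + k%:R * delta) (z1 + (k.+1)%:R * delta))) /\
  (forall K : nat, (1 <= K)%N ->
     ~ @bellman_closed R _ (fun k : 'I_K =>
          quantile_stat ((2 * k + 1)%N%:R / (2 * K)%N%:R))).
Proof.
split; [exact: cdrl_not_bellman_closed | exact: qdrl_not_bellman_closed].
Qed.
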